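(* Let $T$ be a rooted tree (of arbitrary degree) stored in light-first order with respect to some space-filling curve, and let $\hat T$ be the virtual tree obtained from $T$ by the transformation described in the context. If every vertex of $\hat T$ is stored in the same processor as in $T$, then $\hat T$ is also stored in light-first order.
   Context: Processors sit on the cells of a 2D grid enumerated by a space-filling curve; vertex $v$ is stored at position $p_v$. For a rooted tree (real or virtual), $s(v)$ is the size of the subtree rooted at $v$; the tree is stored in light-first order if for every vertex $v$, its children can be indexed $u_1,\dots,u_m$ with $s(u_1)\le\dots\le s(u_m)$ so that $u_i$ is stored at position $p_v+1+\sum_{j<i}s(u_j)$. Virtual tree: every vertex $v$ carries an ordered list $C(v)$ of current children, initially the children of $v$ in $T$ listed in light-first order (nondecreasing subtree size, i.e. increasing position), and an ordered list $A(v)$ of appended children, initially empty. The children of $v$ in the virtual tree are the elements of $C(v)$ followed by those of $A(v)$. $\textsc{Transform}(v)$, for $C(v)=(c_1,\dots,c_d)$ and $A(v)=(a_1,\dots,a_{d'})$: (1) set $A(c_1):=(c_2,\dots,c_{\lfloor d/2\rfloor})$ and $A(c_{\lfloor d/2\rfloor+1}):=(c_{\lfloor d/2\rfloor+2},\dots,c_d)$, and set $C(v):=(c_1,c_{\lfloor d/2\rfloor+1})$; (2) set $A(a_1):=(a_2,\dots,a_{\lfloor d'/2\rfloor})$ and $A(a_{\lfloor d'/2\rfloor+1}):=(a_{\lfloor d'/2\rfloor+2},\dots,a_{d'})$, and set $A(v):=(a_1,a_{\lfloor d'/2\rfloor+1})$; (3) apply $\textsc{Transform}$ to $c_1$, $c_{\lfloor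 d/2\rfloor+1}$, $a_1$ and $a_{\lfloor d'/2\rfloor+1}$. (Index ranges with upper end below lower end are empty, repeated entries are listed once, and nonexistent elements are ignored.) $\hat T$ starts equal to $T$ and is transformed by applying $\textsc{Transform}$ starting from the root; the result is a virtual tree in which each vertex has at most 4 children. *)

From Stdlib Require Import List Permutation.
From mathcomp Require Import all_boot.
Set Implicit Arguments. Unset Strict Implicit. Unset Printing Implicit Defensive.

(* Rooted trees of arbitrary degree, vertices labelled by elements of V.
   The order of the [children] list carries no meaning for T itself. *)
Inductive tree (V : Type) := Node of V & seq (tree V).
Arguments Node {V} _ _.

Section Trees.
Variable V : eqType.

Definition root (t : tree V) : V := let: Node v _ := t in v.
Definition children (t : tree V) : seq (tree V) := let: Node _ cs := t in cs.

Fixpoint tsize (t : tree V) : nat :=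
  let: Node _ cs := t in (sumn (map tsize cs)).+1.

Fixpoint subtrees (t : tree V) : seq (tree V) :=
  let: Node _ cs := t in t :: flatten (map subtrees cs).

Definition vertices (t : tree V) : seq V := map root (subtrees t).

Variable p : V -> nat. (* p v = position of v along the space-filling curve *)

Definition light_first_at (t : tree V) : Prop :=
  exists us : seq (tree V),
    Permutation us (children t) /\
    sorted (fun a b => tsize a <= tsize b) us /\
    (forall us1 u us2, us = us1 ++ u :: us2 ->
       p (root u) = p (root t) + 1 + sumn (map tsize us1)).

Definition light_first (t : tree V) : Prop :=
  forall u, In u (subtrees t) -> light_first_at u.

(* C(v) initially: children of v in light-first order, i.e. by increasing position *)
Definition init_C (t : tree V) : seq (tree V) :=
  sort (fun a b => p (root a) <= p (root b)) (children t).

(* Given a list l = (x_1,...,x_k) of (original) subtrees, with h = floor(k/2):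
   the new children are x_1 (with appended list x_2..x_h) and
   x_{h+1} (with appended list x_{h+2}..x_k); repeated/nonexistent ones dropped. *)
Definition split_with (f : tree V -> seq (tree V) -> tree V) (l : seq (tree V))
  : seq (tree V) :=
  let h := (size l)./2 in
  (if take h l is x :: xs then [:: f x xs] else [::]) ++
  (if drop h l is x :: xs then [:: f x xs] else [::]).

(* vt n t A = the transformed virtual subtree rooted at (root t), where
   C(root t) = init_C t and A(root t) = A (a list of original subtrees).
   n is fuel; n >= total number of vertices of t and A is always sufficient,
   since each recursive call removes at least the current vertex. *)
Fixpoint vt (n : nat) (t : tree V) (A : seq (tree V)) : tree V :=
  match n with
  | 0 => Node (root t) [::]
  | n'.+1 => Node (root t) (split_with (vt n') (init_C t) ++ split_with (vt n') A)
  end.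

Definition virtual_tree (T : tree V) : tree V := vt (tsize T) T [::].

End Trees.

From Stdlib Require Import List Permutation Lia.
From mathcomp Require Import all_boot zify.
Set Implicit Arguments. Unset Strict Implicit. Unset Printing Implicit Defensive.

(* Transform at v turns the subtree of v in T together with its appended list
   A(v) into the virtual subtree of v.  The invariant is that this list is a run
   of light-first trees stored contiguously from p_v with nondecreasing sizes.
   Splitting a run at floor(k/2) and fusing each half into one virtual subtree
   keeps it contiguous, and the first half weighs at most the second since the
   sizes are sorted.  The fused pieces of C(v) weigh s(v) - 1 < s(v) in total,
   while every piece of A(v) weighs at least s(v); so the new children of v,
   C(v) followed by A(v), are again in light-first order, and the claim follows
   by induction on the size of the run. *)

Lemma perm_eq_Permutation (T : eqType) (s1 s2 : seq T) :
  perm_eq s1 s2 -> Permutation s1 s2.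
Proof.
elim: s1 s2 => [|x s1 IH] s2 eq12.
  by rewrite perm_sym in eq12; move/perm_nilP: eq12 => ->.
have x_s2 : x \in s2 by rewrite -(perm_mem eq12) mem_head.
case/splitPr: x_s2 eq12 => l r.
rewrite perm_sym -[l ++ _]/(l ++ [:: x] ++ r) perm_catCA perm_cons perm_sym => eq12.
exact/Permutation_cons_app/IH.
Qed.

Lemma Permutation_sort (T : Type) (leT : rel T) (s : seq T) :
  Permutation (sort leT s) s.
Proof.
case: s => [|x0 s]; first exact: perm_nil.
rewrite -(mkseq_nth x0 (x0 :: s)) /mkseq sort_map.
exact: Permutation_map (perm_eq_Permutation (permEl (perm_sort _ _))).
Qed.

Lemma all_In (T : Type) (a : pred T) (s : seq T) x : all a s -> In x s -> a x.
Proof. by elim: s => //= y s IH /andP[ay /IH ?] [<-|]. Qed.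

Lemma Permutation_sorted_eq (T : Type) (f : T -> nat) (s1 s2 : seq T) :
  Permutation s1 s2 -> sorted (relpre f leq) s1 -> sorted (relpre f ltn) s2 ->
  s1 = s2.
Proof.
elim: s1 s2 => [|x s1 IH] [|y s2] perm12 le_s1 lt_s2 //;
  try by have := Permutation_length perm12.
have eq_xy : x = y.
  have le_x := order_path_min (fun _ _ _ => @leq_trans _ _ _) le_s1.
  have lt_y := order_path_min (fun _ _ _ => @ltn_trans _ _ _) lt_s2.
  case: (Permutation_in x perm12 (in_eq x s1)) => [//|/(all_In lt_y) /= lt_yx].
  case: (Permutation_in y (Permutation_sym perm12) (in_eq y s2)) => [//|].
  by move/(all_In le_x); rewrite /= leqNgt lt_yx.
subst y; congr cons; apply: IH.
- exact: Permutation_cons_inv perm12.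
- exact: path_sorted le_s1.
- exact: path_sorted lt_s2.
Qed.

Lemma leq_sumn_allrel (s1 s2 : seq nat) :
  allrel leq s1 s2 -> size s1 <= size s2 -> sumn s1 <= sumn s2.
Proof.
elim: s1 s2 => [|x s1 IH] [|y s2] //=.
rewrite allrel_consl allrel_consr /= => /and3P[/andP[xy _] _ /IH le12] /le12.
exact: leq_add.
Qed.

Lemma leq_sumn_halves (s : seq nat) :
  sorted leq s -> sumn (take (size s)./2 s) <= sumn (drop (size s)./2 s).
Proof.
rewrite sorted_pairwise; last exact: leq_trans.
rewrite -{1}(cat_take_drop (size s)./2 s) pairwise_cat => /and3P[s12 _ _].
apply: leq_sumn_allrel => //; rewrite size_take size_drop.
by have := odd_double_half (size s); rewrite -addnn; case: odd; case: ltnP => /=; lia.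
Qed.

Lemma all_leq_sumn (s : seq nat) : all (leq^~ (sumn s)) s.
Proof. by elim: s => //= x s IH; rewrite leq_addr; apply: sub_all IH => y; lia. Qed.

Section LightFirst.
Variables (V : eqType) (p : V -> nat).

Definition fsize (l : seq (tree V)) : nat := sumn (map (@tsize V) l).

Lemma tsize_gt0 (t : tree V) : 0 < tsize t.
Proof. by case: t. Qed.

Lemma fsize_cat l1 l2 : fsize (l1 ++ l2) = fsize l1 + fsize l2.
Proof. by rewrite /fsize map_cat sumn_cat. Qed.

Lemma Permutation_fsize l1 l2 : Permutation l1 l2 -> fsize l1 = fsize l2.
Proof.
rewrite /fsize; elim=> //= [x l l' _ -> | x y l | l l' l'' _ -> _ ->] //; lia.
Qed.

Lemma subtrees_Node v cs :
  subtrees (Node v cs) = Node v cs :: flat_map (@subtrees V) cs.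
Proof. by congr cons; elim: cs => //= c cs ->. Qed.

Fixpoint contiguous (q : nat) (l : seq (tree V)) : Prop :=
  if l is t :: l' then p (root t) = q /\ contiguous (q + tsize t) l' else True.

Lemma contiguous_cat q l1 l2 :
  contiguous q (l1 ++ l2) <-> contiguous q l1 /\ contiguous (q + fsize l1) l2.
Proof.
elim: l1 q => [|t l1 IH] q /=; first by rewrite addn0; tauto.
by rewrite IH /fsize /= addnA; tauto.
Qed.

Lemma contiguousP q l : contiguous q l <->
  (forall l1 u l2, l = l1 ++ u :: l2 -> p (root u) = q + fsize l1).
Proof.
elim: l q => [|t l IH] q /=; first by split=> // _ [].
rewrite IH; split=> [[pt Hl] [|t1 l1] u l2 /= [<- eql]|Hl].
- by rewrite addn0.
- by rewrite (Hl _ _ _ eql) /fsize /= addnA.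
split; first by rewrite (Hl [::] t l) ?addn0.
by move=> l1 u l2 eql; rewrite (Hl (t :: l1) u l2) ?eql // /fsize /= addnA.
Qed.

Lemma contiguous_sorted q l :
  contiguous q l -> sorted (relpre (fun t => p (root t)) ltn) l.
Proof.
elim: l q => [|t [|u l] IH] q //= [pt [pu Hl]].
rewrite [path _ _ _](IH _ (conj pu Hl)) andbT pt pu -[X in X < _]addn0 ltn_add2l.
exact: tsize_gt0.
Qed.

Definition light_first_seq (q : nat) (l : seq (tree V)) : Prop :=
  [/\ Forall (light_first p) l, contiguous q l & sorted leq (map (@tsize V) l)].

Lemma light_first_seq_cat q l1 l2 :
  light_first_seq q (l1 ++ l2) <->
  [/\ light_first_seq q l1, light_first_seq (q + fsize l1) l2 &
      allrel leq (map (@tsize V) l1) (map (@tsize V) l2)].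
Proof.
rewrite /light_first_seq map_cat !sorted_pairwise ?pairwise_cat; try exact: leq_trans.
split=> [[/Forall_app[? ?] /contiguous_cat[? ?] /and3P[? ? ?]] //|].
by case=> [[? ? ->] [? ? ->] ->]; split; [apply/Forall_app | apply/contiguous_cat |].
Qed.

Lemma light_first_Node v cs :
  light_first_seq (p v + 1) cs -> light_first p (Node v cs).
Proof.
case=> /Forall_forall lf_cs c_cs s_cs u; rewrite subtrees_Node => -[<-|].
- exists cs; split; first exact: Permutation_refl.
  by split; [rewrite sorted_map in s_cs | apply/contiguousP].
- by case/in_flat_map => c [/lf_cs]; apply.
Qed.

Lemma light_first_init_C v cs : light_first p (Node v cs) ->
  Permutation (init_C p (Node v cs)) cs /\
  light_first_seq (p v + 1) (init_C p (Node v cs)).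
Proof.
move=> lf_t.
have [us [perm_us [s_us /contiguousP c_us]]] : light_first_at p (Node v cs).
  by apply: lf_t; rewrite subtrees_Node; left.
have perm_C : Permutation (init_C p (Node v cs)) cs by apply: Permutation_sort.
have -> : init_C p (Node v cs) = us.
  apply: (Permutation_sorted_eq (f := fun t => p (root t))).
  - exact: Permutation_trans perm_C (Permutation_sym perm_us).
  - by apply: sort_sorted => a b; apply: leq_total.
  - exact: contiguous_sorted c_us.
split=> //; split=> //; last by rewrite sorted_map.
apply/Forall_forall => c /(Permutation_in _ perm_us) c_cs u u_c.
by apply: lf_t; rewrite subtrees_Node; right; apply/in_flat_map; exists c.
Qed.

Lemma root_vt n t A : root (vt p n t A) = root t.
Proof. by case: n. Qed.

Section Split.
Variables (f : tree V -> seq (tree V) -> tree V) (n : nat).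
Hypothesis f_spec : forall x xs,
  light_first_seq (p (root x)) (x :: xs) -> fsize (x :: xs) <= n ->
  [/\ root (f x xs) = root x, light_first p (f x xs) & tsize (f x xs) = fsize (x :: xs)].

Definition fuse (l : seq (tree V)) : seq (tree V) :=
  if l is x :: xs then [:: f x xs] else [::].

Lemma light_first_seq_fuse q l : light_first_seq q l -> fsize l <= n ->
  [/\ light_first_seq q (fuse l), fsize (fuse l) = fsize l,
      all (pred1 (fsize l)) (map (@tsize V) (fuse l)) &
      forall m, all (leq m) (map (@tsize V) l) -> all (leq m) (map (@tsize V) (fuse l))].
Proof.
case: l => [|x xs] lf_l le_n //=.
have [_ [px _] _] := lf_l; rewrite -px in lf_l.
have [rx lf_x sx] := f_spec lf_l le_n.
split=> [|||m /andP[mx _]]; rewrite /fsize /= ?addn0 ?sx ?eqxx //.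
- by split=> //=; [exact: Forall_cons | rewrite rx].
- by rewrite andbT /fsize /=; lia.
Qed.

Lemma light_first_seq_split q l : light_first_seq q l -> fsize l <= n ->
  [/\ light_first_seq q (split_with f l), fsize (split_with f l) = fsize l &
      forall m, all (leq m) (map (@tsize V) l) ->
        all (leq m) (map (@tsize V) (split_with f l))].
Proof.
move=> lf_l le_n; have [_ _ sorted_l] := lf_l.
rewrite -[split_with f l]/(fuse (take (size l)./2 l) ++ fuse (drop (size l)./2 l)).
have half : fsize (take (size l)./2 l) <= fsize (drop (size l)./2 l).
  by rewrite /fsize map_take map_drop -(size_map (@tsize V)) leq_sumn_halves.
move: (size l)./2 half => h half.
have def_l := esym (cat_take_drop h l).
set l1 := take h l in half def_l *; set l2 := drop h l in half def_l *.
clearbody l1 l2; subst l.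
have [lf1 lf2 _] := iffLR (light_first_seq_cat _ _ _) lf_l.
rewrite fsize_cat in le_n *.
have [|lf1' fsize1 size1 low1] := light_first_seq_fuse lf1; first lia.
have [|lf2' fsize2 size2 low2] := light_first_seq_fuse lf2; first lia.
split.
- apply/light_first_seq_cat; split; rewrite ?fsize1 //.
  by apply/allrelP => x y /(allP size1)/eqP-> /(allP size2)/eqP->.
- by rewrite fsize_cat fsize1 fsize2.
by move=> m; rewrite !map_cat !all_cat => /andP[/low1-> /low2->].
Qed.

End Split.

Lemma light_first_vt n t A :
  light_first_seq (p (root t)) (t :: A) -> fsize (t :: A) <= n ->
  light_first p (vt p n t A) /\ tsize (vt p n t A) = fsize (t :: A).
Proof.
elim: n t A => [|n IH] [v cs] A lf_tA le_n.
  by have := tsize_gt0 (Node v cs); rewrite /fsize /= in le_n; lia.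
have vt_spec x xs : light_first_seq (p (root x)) (x :: xs) -> fsize (x :: xs) <= n ->
    [/\ root (vt p n x xs) = root x, light_first p (vt p n x xs) &
        tsize (vt p n x xs) = fsize (x :: xs)].
  by move=> lf le; have [? ?] := IH x xs lf le; rewrite root_vt.
rewrite -cat1s in lf_tA; case/light_first_seq_cat: lf_tA => -[lf_t1 _ _] lf_A.
rewrite /= allrel1l => le_A; have lf_t := Forall_inv lf_t1.
have [perm_C lf_C] := light_first_init_C lf_t.
set C := init_C p (Node v cs) in perm_C lf_C *.
have fsize_C : fsize C = fsize cs := Permutation_fsize perm_C.
have {}le_n : fsize cs + fsize A <= n by move: le_n; rewrite /fsize /=; lia.
have [|lf_C' fsize_C' _] := light_first_seq_split vt_spec lf_C; first lia.
have [|lf_A' fsize_A' le_A'] := light_first_seq_split vt_spec lf_A; first lia.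
change (vt p n.+1 (Node v cs) A) with
  (Node v (split_with (vt p n) C ++ split_with (vt p n) A)).
split; last by rewrite /= -/(fsize _) fsize_cat fsize_C' fsize_A' fsize_C.
apply: light_first_Node; apply/light_first_seq_cat; split=> //.
  rewrite fsize_C' fsize_C.
  by have -> : p v + 1 + fsize cs = p v + fsize [:: Node v cs] by rewrite /fsize /=; lia.
apply/allrelP => x y /(allP (all_leq_sumn _)) le_x /(allP (le_A' _ le_A)) lt_y.
rewrite -/(fsize _) fsize_C' fsize_C in le_x.
exact: leq_trans le_x (ltnW lt_y).
Qed.

End LightFirst.

Theorem mainTheorem5 (V : eqType) (p : V -> nat) (T : tree V) :
  uniq (vertices T) ->
  light_first p T ->
  light_first p (virtual_tree p T).
Proof.
(* Positions are read through [p] alone. *)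
move=> _ lf_T.
have lf_seq : light_first_seq p (p (root T)) [:: T].
  by split=> //; apply: Forall_cons.
by have [] := light_first_vt (n := tsize T) lf_seq; rewrite /fsize /= addn0.
Qed.
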